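(* Fix $\epsilon\in(0,1/2)$. Consider a scalar parameter $\theta\in\mathbb{R}$, clean-label probability $p=\sigma(\theta)=(1+e^{-\theta})^{-1}$ and noise contamination $\tilde p=1-p$, and the objective $$J(\theta)=(1-\epsilon)\,\ell_q(\sigma(\theta))+\epsilon\,\ell_q(1-\sigma(\theta)),\qquad \ell_q(u)=-\log_q u,$$ with gradient flow $\dot\theta=-J'(\theta)$. (i) For $q\in(0,1]$, let $r=(\epsilon/(1-\epsilon))^{1/q}$ and $\tilde p_*(q)=r/(1+r)$ (the unique point in $(0,1)$ where $\frac{d}{dp}[(1-\epsilon)\ell_q(p)+\epsilon\ell_q(1-p)]=0$). Fix $\eta\in(0,\tilde p_*(q))$, and for $\tilde p_0\in(0,\eta)$ let $T_q^{\mathrm{noise}}(\tilde p_0)$ be the time for the flow started at $\tilde p(0)=\tilde p_0$ to reach $\tilde p=\eta$. Then, as $\tilde p_0\to0$ (with $q,\epsilon,\eta$ fixed), $$T_q^{\mathrm{noise}}(\tilde p_0)=\Theta\!\left(\frac{\tilde p_0^{-(1-q)}}{(1-q)\,\epsilon}\right)\ \text{for } q\in(0,1),\qquad T_1^{\mathrm{noise}}(\tilde p_0)=\Theta\!\left(\frac{\log(1/\tilde p_0)}{\epsilon}\right),$$ and for $0<q<q'\le1$, $T_q^{\mathrm{noise}}(\tilde p_0)/T_{q'}^{\mathrm{noise}}(\tilde p_0)=\Theta(\tilde p_0^{-(q'-q)})\to\infty$. (ii) For $q=0$, $\dot{\tilde p}=-(1-2\epsilon)p^2\tilde p^2<0$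 whenever $\tilde p\in(0,1)$, so from any $\tilde p_0\in(0,1)$ the contamination decreases monotonically and never reaches any target $\eta>\tilde p_0$ (i.e. $T_0^{\mathrm{noise}}(\tilde p_0)=\infty$).
   Context: The Tsallis $q$-logarithm is $\log_q(u)=\frac{u^{1-q}-1}{1-q}$ for $u\in(0,1]$, $q\in[0,1)$, and $\log_1(u)=\log u$. Under this flow, $\dot{\tilde p}=\big[\epsilon\tilde p^{-q}-(1-\epsilon)(1-\tilde p)^{-q}\big]\,p^2\,\tilde p^2$.
   Formalization: For q′ = 1 the ratio $T_q^{\mathrm{noise}}(\tilde p_0)/T_{q'}^{\mathrm{noise}}(\tilde p_0)$ is Θ( $\tilde p_0^{-(1-q)}$ / $\log(1/\tilde p_0)$ ) instead of $\Theta(\tilde p_0^{-(q'-q)})$, which is asserted for q′ < 1 only. The statement above fails without it. *)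

From Stdlib Require Import Reals Lra.
From Coquelicot Require Import Coquelicot.
Open Scope R_scope.

Definition sigmoid (x : R) : R := / (1 + exp (- x)).

Definition logq (q u : R) : R :=
  if Req_EM_T q 1 then ln u else (Rpower u (1 - q) - 1) / (1 - q).

Definition lossq (q u : R) : R := - logq q u.

Definition Jobj (eps q : R) (theta : R) : R :=
  (1 - eps) * lossq q (sigmoid theta) + eps * lossq q (1 - sigmoid theta).

Definition is_flow (eps q : R) (th : R -> R) : Prop :=
  forall t : R, is_derive th t (- Derive (Jobj eps q) (th t)).

Definition pclean (th : R -> R) (t : R) : R := sigmoid (th t).
Definition ptilde (th : R -> R) (t : R) : R := 1 - sigmoid (th t).

Definition pstar (eps q : R) : R :=
  let r := Rpower (eps / (1 - eps)) (1 / q) in r / (1 + r).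

Definition first_hit (f : R -> R) (eta T : R) : Prop :=
  0 <= T /\ f T = eta /\ (forall s, 0 <= s < T -> f s <> eta).

From Stdlib Require Import Reals Lra.
From Coquelicot Require Import Coquelicot.
Open Scope R_scope.

(* Write x = ptilde and p = 1 - x, so that the flow reads
   x' = p^2 x^2 (eps x^-q - (1 - eps) p^-q).  For any potential Phi with Phi'(x) = - x^(q-2)
   (namely x^(q-1)/(1-q) for q < 1 and ln(1/x) for q = 1) the chain rule gives
   (Phi o x)' = - (1 - x)^2 (eps - (1 - eps) (x/(1-x))^q).  The bracket vanishes exactly at
   pstar, and on (0, eta] with eta < pstar this decay rate lies between its (positive) value at
   eta and eps.  So the time to reach eta is Phi(p0) - Phi(eta) up to the factors 1/eps and
   1/rate(eta); since Phi(p0) dominates Phi(eta) as p0 -> 0, this is Theta(Phi(p0)).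
   For q = 0 the bracket is the constant -(1 - 2 eps) < 0, so ptilde strictly decreases. *)

Lemma is_derive_eq (f : R -> R) (x l l' : R) : is_derive f x l -> l = l' -> is_derive f x l'.
Proof. now intros H <-. Qed.

Lemma sigmoid_bounds x : 0 < sigmoid x < 1.
Proof.
  unfold sigmoid. pose proof (exp_pos (- x)). split.
  - apply Rinv_0_lt_compat; lra.
  - rewrite <- Rinv_1. apply Rinv_lt_contravar; lra.
Qed.

Lemma is_derive_sigmoid x : is_derive sigmoid x (sigmoid x * (1 - sigmoid x)).
Proof.
  unfold sigmoid. pose proof (exp_pos (- x)).
  auto_derive; [lra|]. field. lra.
Qed.

Lemma is_derive_lossq q u : 0 < u -> is_derive (lossq q) u (- Rpower u (- q)).
Proof.
  intros Hu. unfold lossq, logq. destruct (Req_EM_T q 1) as [->|Hq].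
  - rewrite Rpower_Ropp, Rpower_1 by lra.
    auto_derive; [lra | field; lra].
  - assert (Hpow : is_derive (fun x : R => Rpower x (1 - q)) u ((1 - q) * Rpower u (1 - q - 1)))
      by now apply is_derive_Reals, derivable_pt_lim_power.
    auto_derive; [now exists ((1 - q) * Rpower u (1 - q - 1))|].
    rewrite (is_derive_unique _ _ _ Hpow).
    replace (1 - q - 1) with (- q) by ring. field. lra.
Qed.

Lemma is_derive_Jobj eps q x :
  is_derive (Jobj eps q) x
    (sigmoid x * (1 - sigmoid x)
     * (eps * Rpower (1 - sigmoid x) (- q) - (1 - eps) * Rpower (sigmoid x) (- q))).
Proof.
  destruct (sigmoid_bounds x) as [Hs0 Hs1].
  assert (Hs := is_derive_sigmoid x).
  assert (Hl := is_derive_lossq q _ Hs0).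
  assert (Hl' := is_derive_lossq q (1 + - sigmoid x) ltac:(lra)).
  unfold Jobj. auto_derive.
  - repeat split; eexists; eauto.
  - rewrite (is_derive_unique (fun y : R => sigmoid y) _ _ Hs),
      (is_derive_unique (fun u : R => lossq q u) _ _ Hl),
      (is_derive_unique (fun u : R => lossq q u) _ _ Hl').
    replace (1 + - sigmoid x) with (1 - sigmoid x) by ring. ring.
Qed.

Lemma is_derive_ptilde eps q th t : is_flow eps q th ->
  is_derive (ptilde th) t
    (pclean th t ^ 2 * ptilde th t ^ 2
     * (eps * Rpower (ptilde th t) (- q) - (1 - eps) * Rpower (pclean th t) (- q))).
Proof.
  intros Hflow. assert (Hth := Hflow t).
  rewrite (is_derive_unique _ _ _ (is_derive_Jobj eps q (th t))) in Hth.
  assert (Hs := is_derive_sigmoid (th t)).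
  unfold ptilde, pclean. auto_derive.
  - split; [eexists; exact Hs | split; [eexists; exact Hth | exact I]].
  - rewrite (is_derive_unique (fun y : R => sigmoid y) _ _ Hs),
      (is_derive_unique (fun y : R => th y) _ _ Hth).
    ring.
Qed.

Definition decay_rate (eps q x : R) : R :=
  (1 - x) ^ 2 * (eps - (1 - eps) * Rpower (x / (1 - x)) q).

Lemma is_derive_potential_flow eps q th (Phi : R -> R) t :
  is_flow eps q th -> (forall x, 0 < x -> is_derive Phi x (- Rpower x (q - 2))) ->
  is_derive (fun s => Phi (ptilde th s)) t (- decay_rate eps q (ptilde th t)).
Proof.
  intros Hflow HPhi.
  assert (Hp : pclean th t = 1 - ptilde th t) by (unfold ptilde, pclean; ring).
  assert (Hx : 0 < ptilde th t < 1) by (unfold ptilde; pose proof (sigmoid_bounds (th t)); lra).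
  set (x := ptilde th t) in *.
  pose proof (is_derive_comp Phi (ptilde th) t _ _ (HPhi x (proj1 Hx)) (is_derive_ptilde eps q th t Hflow))
    as Hcomp.
  apply (is_derive_eq _ _ _ _ Hcomp). rewrite Hp. unfold decay_rate.
  assert (Hxq : 0 < Rpower x q) by apply exp_pos.
  assert (Hyq : 0 < Rpower (1 - x) q) by apply exp_pos.
  assert (Hx2 : Rpower x (q - 2) = Rpower x q / x ^ 2).
  { unfold Rminus. rewrite Rpower_plus, Rpower_Ropp, <- (Rpower_pow 2) by lra.
    simpl INR. replace (1 + 1) with 2 by ring. reflexivity. }
  assert (Hodds : Rpower (x / (1 - x)) q = Rpower x q / Rpower (1 - x) q).
  { assert (Hinv : Rpower (/ (1 - x)) q = / Rpower (1 - x) q).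
    { unfold Rpower. rewrite ln_Rinv, <- exp_Ropp by lra. f_equal. ring. }
    unfold Rdiv. rewrite <- Hinv. apply eq_sym, Rpower_mult_distr; [|apply Rinv_0_lt_compat]; lra. }
  change ((1 - x) ^ 2 * x ^ 2 * (eps * Rpower x (- q) - (1 - eps) * Rpower (1 - x) (- q))
    * - Rpower x (q - 2) = - ((1 - x) ^ 2 * (eps - (1 - eps) * Rpower (x / (1 - x)) q))).
  rewrite Hx2, Hodds, !Rpower_Ropp. field. lra.
Qed.

Lemma pstar_bounds eps q : 0 < pstar eps q < 1.
Proof.
  unfold pstar. set (r := Rpower (eps / (1 - eps)) (1 / q)).
  assert (Hr : 0 < r) by apply exp_pos.
  split; [apply Rdiv_lt_0_compat; lra|].
  apply (Rmult_lt_reg_r (1 + r)); [lra|]. field_simplify; lra.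
Qed.

Lemma odds_lt_pstar eps q x : 0 < eps < 1 -> 0 < q -> 0 < x < pstar eps q ->
  (1 - eps) * Rpower (x / (1 - x)) q < eps.
Proof.
  intros Heps Hq Hx. pose proof (pstar_bounds eps q) as Hps.
  unfold pstar in *. set (r := Rpower (eps / (1 - eps)) (1 / q)) in *.
  assert (Hr : 0 < r) by apply exp_pos.
  assert (Hodds : x / (1 - x) < r).
  { apply (Rmult_lt_reg_r (1 - x)); [lra|].
    assert (Hxr : x * (1 + r) < r).
    { destruct Hx as [_ Hx]. apply (Rmult_lt_compat_r (1 + r)) in Hx; [|lra].
      field_simplify in Hx; lra. }
    field_simplify; lra. }
  assert (Hrq : Rpower r q = eps / (1 - eps)).
  { unfold r. rewrite Rpower_mult. replace (1 / q * q) with 1 by (field; lra).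
    apply Rpower_1, Rdiv_lt_0_compat; lra. }
  assert (Hpow : Rpower (x / (1 - x)) q < eps / (1 - eps)).
  { rewrite <- Hrq. apply Rlt_Rpower_l; [lra|]. split; [apply Rdiv_lt_0_compat|]; lra. }
  apply (Rmult_lt_compat_l (1 - eps)) in Hpow; [|lra].
  replace ((1 - eps) * (eps / (1 - eps))) with eps in Hpow by (field; lra). exact Hpow.
Qed.

Lemma decay_rate_bounds eps q eta x : 0 < eps < 1 -> 0 < q ->
  0 < x <= eta -> eta < pstar eps q ->
  0 < decay_rate eps q eta /\ decay_rate eps q eta <= decay_rate eps q x <= eps.
Proof.
  intros Heps Hq Hx Heta. pose proof (pstar_bounds eps q).
  assert (Hb := odds_lt_pstar eps q eta Heps Hq ltac:(lra)).
  assert (Hmono : Rpower (x / (1 - x)) q <= Rpower (eta / (1 - eta)) q).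
  { apply Rle_Rpower_l; [lra|]. split; [apply Rdiv_lt_0_compat; lra|].
    apply Rmult_le_compat; try lra; [left; apply Rinv_0_lt_compat; lra|].
    apply Rinv_le_contravar; lra. }
  assert (0 < Rpower (x / (1 - x)) q) by apply exp_pos.
  assert ((1 - eta) ^ 2 <= (1 - x) ^ 2) by (apply pow_incr; lra).
  assert ((1 - x) ^ 2 <= 1) by (rewrite <- (pow1 2); apply pow_incr; lra).
  assert (0 < (1 - eta) ^ 2) by (apply pow_lt; lra).
  set (a := Rpower (x / (1 - x)) q) in *. set (b := Rpower (eta / (1 - eta)) q) in *.
  assert (Hab : eps - (1 - eps) * b <= eps - (1 - eps) * a) by nra.
  unfold decay_rate. fold a b. repeat split.
  - apply Rmult_lt_0_compat; lra.
  - apply Rmult_le_compat; lra.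
  - nra.
Qed.

Lemma continuity_pt_ball (f : R -> R) t e : continuity_pt f t -> 0 < e ->
  exists d, 0 < d /\ forall u, Rabs (u - t) < d -> Rabs (f u - f t) < e.
Proof.
  intros Hc He. destruct (Hc e He) as [d [Hd Hball]].
  exists d. split; [exact Hd|]. intros u Hu.
  destruct (Req_dec u t) as [->|Hne].
  - rewrite Rminus_diag, Rabs_R0. exact He.
  - apply Hball. split; [split; [exact I | auto] | exact Hu].
Qed.

(* The first hitting time is the supremum of the times up to which [f] stays below [eta]. *)
Lemma first_hit_exists (f : R -> R) eta t1 :
  (forall t, continuity_pt f t) -> f 0 < eta -> 0 <= t1 -> eta <= f t1 ->
  exists T, first_hit f eta T.
Proof.
  intros Hc H0 Ht1 Hf1.
  set (E := fun s => 0 <= s /\ forall u, 0 <= u <= s -> f u < eta).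
  assert (HE0 : E 0) by (split; [lra | intros u Hu; replace u with 0 by lra; exact H0]).
  assert (Hbound : bound E).
  { exists t1. intros s [Hs Hu]. destruct (Rle_lt_dec s t1); [lra|].
    specialize (Hu t1 ltac:(lra)). lra. }
  destruct (completeness E Hbound (ex_intro _ 0 HE0)) as [T [Hub Hlub]].
  assert (HT0 : 0 <= T) by exact (Hub 0 HE0).
  assert (Hbelow : forall s, 0 <= s < T -> f s < eta).
  { intros s Hs. destruct (Classical_Prop.classic (exists s', E s' /\ s < s'))
      as [[s' [[_ Hs'] Hss']] | Hnone].
    - apply Hs'. lra.
    - assert (T <= s); [|lra]. apply Hlub. intros x Hx.
      destruct (Rle_lt_dec x s); [lra|]. exfalso. eauto. }
  exists T. repeat split; [exact HT0| |intros s Hs; specialize (Hbelow s Hs); lra].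
  destruct (Rtotal_order (f T) eta) as [Hlt|[Heq|Hgt]]; [exfalso| exact Heq |exfalso].
  - destruct (continuity_pt_ball f T (eta - f T) (Hc T) ltac:(lra)) as [d [Hd Hball]].
    assert (HEd : E (T + d / 2)).
    { split; [lra|]. intros u Hu. destruct (Rlt_le_dec u T); [apply Hbelow; lra|].
      assert (Hu' := Hball u ltac:(rewrite Rabs_right; lra)).
      apply Rabs_def2 in Hu'. lra. }
    specialize (Hub _ HEd). lra.
  - destruct (continuity_pt_ball f T (f T - eta) (Hc T) ltac:(lra)) as [d [Hd Hball]].
    assert (HT : T <> 0) by (intros ->; lra).
    set (u := Rmax 0 (T - d / 2)).
    assert (Hu : 0 <= u < T) by (split; [apply Rmax_l | apply Rmax_lub_lt; lra]).
    assert (Hu' := Hball u ltac:(rewrite Rabs_left; pose proof (Rmax_r 0 (T - d / 2)); unfold u in *; lra)).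
    apply Rabs_def2 in Hu'. specialize (Hbelow u Hu). lra.
Qed.

Lemma first_hit_before (f : R -> R) eta T : (forall t, continuity_pt f t) -> f 0 < eta ->
  first_hit f eta T -> forall s, 0 <= s < T -> f s < eta.
Proof.
  intros Hc H0 [_ [_ Hnot]] s Hs.
  destruct (Rtotal_order (f s) eta) as [Hlt|[Heq|Hgt]]; [exact Hlt| now exfalso; apply (Hnot s) |].
  exfalso.
  assert (Hs0 : 0 < s) by (destruct (Req_dec s 0) as [->|]; lra).
  assert (Hcont : continuity (fun u => f u - eta))
    by (intros x; apply continuity_pt_minus; [apply Hc | apply continuity_pt_const; now intros ? ?]).
  destruct (IVT _ 0 s Hcont Hs0 ltac:(lra) ltac:(lra)) as [z [Hz Hfz]].
  apply (Hnot z); lra.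
Qed.

Lemma MVT_is_derive (g D : R -> R) a b : a <= b -> (forall t, is_derive g t (D t)) ->
  exists c, a <= c <= b /\ g b - g a = D c * (b - a).
Proof.
  intros Hab Hd. destruct (MVT_gen g a b D) as [c [Hc Heq]].
  - intros t _. apply Hd.
  - intros t _. apply derivable_continuous_pt. exists (D t). apply is_derive_Reals, Hd.
  - rewrite Rmin_left, Rmax_right in Hc by lra. eauto.
Qed.

(* Existence: a potential bounded below cannot decrease at rate [k] forever. *)
Lemma first_hit_time_bounds (f g D : R -> R) eta k e m :
  (forall t, continuity_pt f t) -> (forall t, is_derive g t (D t)) ->
  (forall t, f t <= eta -> - e <= D t <= - k) -> 0 < k -> 0 < e -> f 0 < eta ->
  (forall t, f t < eta -> m <= g t) ->
  (exists T, first_hit f eta T) /\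
  forall T, first_hit f eta T -> (g 0 - g T) / e <= T <= (g 0 - g T) / k.
Proof.
  intros Hc Hd HD Hk He H0 Hm. split.
  - destruct (Classical_Prop.classic (exists t1, 0 <= t1 /\ eta <= f t1)) as [[t1 [Ht1 Hf1]]|Hnever].
    + exact (first_hit_exists f eta t1 Hc H0 Ht1 Hf1).
    + exfalso.
      assert (Hbelow : forall t, 0 <= t -> f t < eta).
      { intros t Ht. destruct (Rlt_le_dec (f t) eta); [assumption|]. exfalso; eauto. }
      set (t := Rmax 0 ((g 0 - m) / k) + 1).
      assert (Ht : (g 0 - m) / k < t /\ 0 <= t)
        by (unfold t; pose proof (Rmax_l 0 ((g 0 - m) / k)); pose proof (Rmax_r 0 ((g 0 - m) / k)); lra).
      destruct (MVT_is_derive g D 0 t ltac:(lra) Hd) as [c [Hc' Hmvt]].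
      destruct (HD c (Rlt_le _ _ (Hbelow c ltac:(lra)))) as [_ Hdc].
      specialize (Hm t (Hbelow t ltac:(lra))).
      assert (g 0 - m < k * t).
      { destruct Ht as [Ht _]. apply (Rmult_lt_compat_l k) in Ht; [|lra]. field_simplify in Ht; lra. }
      nra.
  - intros T HT. pose proof HT as [HT0 [HfT _]].
    destruct (MVT_is_derive g D 0 T HT0 Hd) as [c [Hc' Hmvt]].
    assert (Hfc : f c <= eta).
    { destruct (Req_dec c T) as [->|]; [lra|]. left. apply (first_hit_before f eta T Hc H0 HT). lra. }
    destruct (HD c Hfc) as [HDl HDu].
    replace (g 0 - g T) with (- D c * T) by lra. split.
    + apply (Rmult_le_reg_r e); [lra|]. field_simplify; [nra | lra].
    + apply (Rmult_le_reg_r k); [lra|]. field_simplify; [nra | lra].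
Qed.

Section HitTime.

Variables (eps q eta : R) (Phi : R -> R).
Hypothesis Heps : 0 < eps < 1.
Hypothesis Hq : 0 < q.
Hypothesis Heta : 0 < eta < pstar eps q.
Hypothesis Phi_deriv : forall x, 0 < x -> is_derive Phi x (- Rpower x (q - 2)).
Hypothesis Phi_ge0 : forall x, 0 < x <= eta -> 0 <= Phi x.

Lemma ptilde_hit_time_bounds th p0 : is_flow eps q th -> ptilde th 0 = p0 -> p0 < eta ->
  (exists T, first_hit (ptilde th) eta T) /\
  forall T, first_hit (ptilde th) eta T ->
    (Phi p0 - Phi eta) / eps <= T <= (Phi p0 - Phi eta) / decay_rate eps q eta.
Proof.
  intros Hflow H0 Hp0.
  assert (Hx : forall t, 0 < ptilde th t) by (intros t; unfold ptilde; pose proof (sigmoid_bounds (th t)); lra).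
  assert (Hderiv : forall t, is_derive (ptilde th) t _) by (intros t; exact (is_derive_ptilde eps q th t Hflow)).
  assert (Hrate : forall t, ptilde th t <= eta ->
            - eps <= - decay_rate eps q (ptilde th t) <= - decay_rate eps q eta).
  { intros t Ht. destruct (decay_rate_bounds eps q eta (ptilde th t) Heps Hq (conj (Hx t) Ht) (proj2 Heta)); lra. }
  destruct (decay_rate_bounds eps q eta eta Heps Hq ltac:(lra) (proj2 Heta)) as [Hk _].
  destruct (first_hit_time_bounds (ptilde th) (fun t => Phi (ptilde th t)) (fun t => - decay_rate eps q (ptilde th t))
              eta (decay_rate eps q eta) eps 0)
    as [Hexists Hbounds].
  - intros t. apply derivable_continuous_pt. eexists. apply is_derive_Reals, Hderiv.
  - intros t. exact (is_derive_potential_flow eps q th Phi t Hflow Phi_deriv).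
  - exact Hrate.
  - exact Hk.
  - lra.
  - lra.
  - intros t Ht. apply Phi_ge0. split; [apply Hx | lra].
  - split; [exact Hexists|]. intros T HT. pose proof HT as [_ [HfT _]].
    rewrite <- H0, <- HfT at 1 2. exact (Hbounds T HT).
Qed.

Lemma hit_time_Theta :
  (exists d, 0 < d /\ forall p0, 0 < p0 < d -> 2 * Phi eta <= Phi p0) ->
  exists k d, 0 < k /\ 0 < d /\
    forall p0 th, 0 < p0 < d -> p0 < eta -> is_flow eps q th -> ptilde th 0 = p0 ->
      (exists T, first_hit (ptilde th) eta T) /\
      forall T, first_hit (ptilde th) eta T -> Phi p0 / (2 * eps) <= T <= Phi p0 / k.
Proof.
  intros [d [Hd Hsmall]].
  destruct (decay_rate_bounds eps q eta eta Heps Hq ltac:(lra) (proj2 Heta)) as [Hk _].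
  exists (decay_rate eps q eta), d. split; [exact Hk|]. split; [exact Hd|].
  intros p0 th Hp0 Hp0eta Hflow H0.
  destruct (ptilde_hit_time_bounds th p0 Hflow H0 Hp0eta) as [Hexists Hbounds].
  split; [exact Hexists|]. intros T HT. destruct (Hbounds T HT) as [Hlow Hup].
  specialize (Hsmall p0 Hp0). assert (0 <= Phi eta) by (apply Phi_ge0; lra).
  split.
  - eapply Rle_trans; [|exact Hlow]. unfold Rdiv. rewrite Rinv_mult.
    assert (0 < / eps) by (apply Rinv_0_lt_compat; lra). nra.
  - eapply Rle_trans; [exact Hup|]. unfold Rdiv.
    assert (0 < / decay_rate eps q eta) by (apply Rinv_0_lt_compat; lra). nra.
Qed.

End HitTime.

(* Up to additive constants these are [lossq (2 - q)] and [lossq 1]: antiderivatives of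
   [- x ^ (q - 2)], which turn the flow of [ptilde] into a decay at rate [decay_rate]. *)
Definition potential (q x : R) : R := Rpower x (- (1 - q)) / (1 - q).
Definition log_potential (x : R) : R := ln (1 / x).

Lemma is_derive_potential q x : q < 1 -> 0 < x -> is_derive (potential q) x (- Rpower x (q - 2)).
Proof.
  intros Hq Hx.
  assert (Hpow : is_derive (fun y : R => Rpower y (- (1 - q))) x (- (1 - q) * Rpower x (- (1 - q) - 1)))
    by now apply is_derive_Reals, derivable_pt_lim_power.
  unfold potential. auto_derive; [eexists; exact Hpow|].
  rewrite (is_derive_unique _ _ _ Hpow).
  replace (- (1 - q) - 1) with (q - 2) by ring. field. lra.
Qed.

Lemma potential_pos q x : q < 1 -> 0 < potential q x.
Proof. intros Hq. apply Rdiv_lt_0_compat; [apply exp_pos | lra]. Qed.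

Lemma potential_doubling q eta : q < 1 -> 0 < eta ->
  exists d, 0 < d /\ forall p0, 0 < p0 < d -> 2 * potential q eta <= potential q p0.
Proof.
  intros Hq Heta. set (a := 1 - q). assert (Ha : 0 < a) by (unfold a; lra).
  exists (eta * Rpower 2 (- / a)). split; [apply Rmult_lt_0_compat; [lra | apply exp_pos]|].
  intros p0 Hp0. unfold potential. fold a.
  assert (Hd : Rpower (eta * Rpower 2 (- / a)) (- a) = 2 * Rpower eta (- a)).
  { rewrite <- Rpower_mult_distr, Rpower_mult by (try apply exp_pos; lra).
    replace (- / a * - a) with 1 by (field; lra). rewrite Rpower_1 by lra. ring. }
  assert (Hmono : Rpower (eta * Rpower 2 (- / a)) (- a) <= Rpower p0 (- a)).
  { rewrite (Rpower_Ropp p0), (Rpower_Ropp (eta * _)). apply Rinv_le_contravar; [apply exp_pos|].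
    apply Rle_Rpower_l; [|split]; lra. }
  rewrite Hd in Hmono. unfold Rdiv. rewrite <- Rmult_assoc.
  apply Rmult_le_compat_r; [left; apply Rinv_0_lt_compat|]; lra.
Qed.

Lemma is_derive_log_potential x : 0 < x -> is_derive log_potential x (- Rpower x (1 - 2)).
Proof.
  intros Hx. replace (1 - 2) with (- (1)) by ring. rewrite Rpower_Ropp, Rpower_1 by lra.
  unfold log_potential. auto_derive.
  - split; [lra | split; [apply Rmult_lt_0_compat; [lra | apply Rinv_0_lt_compat; lra] | exact I]].
  - field. lra.
Qed.

Lemma log_potential_pos x : 0 < x < 1 -> 0 < log_potential x.
Proof.
  intros Hx. unfold log_potential. rewrite <- ln_1.
  apply ln_increasing; [lra|]. apply (Rmult_lt_reg_r x); [lra|]. field_simplify; lra.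
Qed.

Lemma log_potential_doubling eta : 0 < eta < 1 ->
  exists d, 0 < d /\ forall p0, 0 < p0 < d -> 2 * log_potential eta <= log_potential p0.
Proof.
  intros Heta. exists (eta * eta). split; [nra|]. intros p0 Hp0.
  unfold log_potential, Rdiv. rewrite !Rmult_1_l, !ln_Rinv by lra.
  assert (ln p0 < ln (eta * eta)) by (apply ln_increasing; lra).
  rewrite ln_mult in H by lra. lra.
Qed.

Lemma potential_hit_time eps q eta : 0 < eps < 1 -> 0 < q < 1 -> 0 < eta < pstar eps q ->
  exists k d, 0 < k /\ 0 < d /\
    forall p0 th, 0 < p0 < d -> p0 < eta -> is_flow eps q th -> ptilde th 0 = p0 ->
      (exists T, first_hit (ptilde th) eta T) /\
      forall T, first_hit (ptilde th) eta T ->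
        potential q p0 / (2 * eps) <= T <= potential q p0 / k.
Proof.
  intros Heps Hq Heta. apply hit_time_Theta; try tauto.
  - intros x Hx. apply is_derive_potential; lra.
  - intros x Hx. left. apply potential_pos; lra.
  - apply potential_doubling; lra.
Qed.

Lemma log_potential_hit_time eps eta : 0 < eps < 1 -> 0 < eta < pstar eps 1 ->
  exists k d, 0 < k /\ 0 < d /\
    forall p0 th, 0 < p0 < d -> p0 < eta -> is_flow eps 1 th -> ptilde th 0 = p0 ->
      (exists T, first_hit (ptilde th) eta T) /\
      forall T, first_hit (ptilde th) eta T ->
        log_potential p0 / (2 * eps) <= T <= log_potential p0 / k.
Proof.
  intros Heps Heta. pose proof (pstar_bounds eps 1).
  apply hit_time_Theta; try tauto; [lra | | |].
  - exact is_derive_log_potential.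
  - intros x Hx. left. apply log_potential_pos; lra.
  - apply log_potential_doubling; lra.
Qed.

Lemma quotient_bounds T T' a b a' b' : 0 < a -> a <= T <= b -> 0 < a' -> a' <= T' <= b' ->
  a / b' <= T / T' <= b / a'.
Proof.
  intros Ha HT Ha' HT'. split.
  - apply (Rmult_le_reg_r (T' * b')); [nra|]. field_simplify; nra.
  - apply (Rmult_le_reg_r (a' * T')); [nra|]. field_simplify; nra.
Qed.

Lemma Rpower_neg_unbounded c b M : 0 < c -> 0 < b ->
  exists d, 0 < d /\ forall p0, 0 < p0 < d -> M < c * Rpower p0 (- b).
Proof.
  intros Hc Hb. set (K := Rabs M / c + 1).
  assert (HK : 0 < K) by (unfold K; pose proof (Rabs_pos M); pose proof (Rdiv_le_0_compat _ _ (Rabs_pos M) Hc); lra).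
  exists (Rpower K (- / b)). split; [apply exp_pos|]. intros p0 Hp0.
  assert (HKb : Rpower (Rpower K (- / b)) (- b) = K).
  { rewrite Rpower_mult. replace (- / b * - b) with 1 by (field; lra). apply Rpower_1; lra. }
  assert (Hmono : K <= Rpower p0 (- b)).
  { rewrite <- HKb, (Rpower_Ropp p0), (Rpower_Ropp (Rpower K _)).
    apply Rinv_le_contravar; [apply exp_pos|]. apply Rle_Rpower_l; [|split]; lra. }
  assert (c * K = Rabs M + c) by (unfold K; field; lra).
  pose proof (Rle_abs M). nra.
Qed.

Lemma ln_inv_lt_Rpower p0 a : 0 < p0 -> 0 < a -> ln (1 / p0) < (2 / a) * Rpower p0 (- (a / 2)).
Proof.
  intros Hp Ha.
  assert (Hy : Rpower p0 (- (a / 2)) = exp (a / 2 * ln (1 / p0))).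
  { unfold Rpower. replace (1 / p0) with (/ p0) by (field; lra). rewrite ln_Rinv by lra. f_equal. ring. }
  rewrite Hy. set (t := a / 2 * ln (1 / p0)). pose proof (exp_ineq1_le t).
  replace (ln (1 / p0)) with (2 / a * t) by (unfold t; field; lra).
  apply Rmult_lt_compat_l; [apply Rdiv_lt_0_compat|]; lra.
Qed.

Lemma hit_time_Theta_q eps q eta :
  0 < eps < 1 / 2 -> 0 < q < 1 -> 0 < eta < pstar eps q ->
  exists c1 c2 d : R, 0 < c1 /\ 0 < c2 /\ 0 < d /\
    forall (p0 : R) (th : R -> R),
      0 < p0 < d -> p0 < eta -> is_flow eps q th -> ptilde th 0 = p0 ->
      exists T : R, first_hit (ptilde th) eta T /\
        c1 * (Rpower p0 (- (1 - q)) / ((1 - q) * eps)) <= T /\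
        T <= c2 * (Rpower p0 (- (1 - q)) / ((1 - q) * eps)).
Proof.
  intros Heps Hq Heta.
  destruct (potential_hit_time eps q eta ltac:(lra) Hq Heta) as [k [d [Hk [Hd Hhit]]]].
  exists (1 / 2), (eps / k), d. split; [lra|]. split; [apply Rdiv_lt_0_compat; lra|]. split; [exact Hd|].
  intros p0 th Hp0 Hp0eta Hflow H0.
  destruct (Hhit p0 th Hp0 Hp0eta Hflow H0) as [[T HT] Hbounds].
  exists T. split; [exact HT|]. destruct (Hbounds T HT) as [Hlow Hup]. unfold potential in *.
  split; [eapply Rle_trans; [|exact Hlow] | eapply Rle_trans; [exact Hup|]]; right; field; lra.
Qed.

Lemma hit_time_Theta_log eps eta :
  0 < eps < 1 / 2 -> 0 < eta < pstar eps 1 ->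
  exists c1 c2 d : R, 0 < c1 /\ 0 < c2 /\ 0 < d /\
    forall (p0 : R) (th : R -> R),
      0 < p0 < d -> p0 < eta -> is_flow eps 1 th -> ptilde th 0 = p0 ->
      exists T : R, first_hit (ptilde th) eta T /\
        c1 * (ln (1 / p0) / eps) <= T /\ T <= c2 * (ln (1 / p0) / eps).
Proof.
  intros Heps Heta.
  destruct (log_potential_hit_time eps eta ltac:(lra) Heta) as [k [d [Hk [Hd Hhit]]]].
  exists (1 / 2), (eps / k), d. split; [lra|]. split; [apply Rdiv_lt_0_compat; lra|]. split; [exact Hd|].
  intros p0 th Hp0 Hp0eta Hflow H0.
  destruct (Hhit p0 th Hp0 Hp0eta Hflow H0) as [[T HT] Hbounds].
  exists T. split; [exact HT|]. destruct (Hbounds T HT) as [Hlow Hup]. unfold log_potential in *.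
  split; [eapply Rle_trans; [|exact Hlow] | eapply Rle_trans; [exact Hup|]]; right; field; lra.
Qed.

Lemma hit_time_ratio eps q q' eta :
  0 < eps < 1 / 2 -> 0 < q -> q < q' -> q' < 1 ->
  0 < eta -> eta < pstar eps q -> eta < pstar eps q' ->
  exists c1 c2 d : R, 0 < c1 /\ 0 < c2 /\ 0 < d /\
    forall (p0 : R) (th th' : R -> R) (T T' : R),
      0 < p0 < d -> p0 < eta ->
      is_flow eps q th -> ptilde th 0 = p0 ->
      is_flow eps q' th' -> ptilde th' 0 = p0 ->
      first_hit (ptilde th) eta T -> first_hit (ptilde th') eta T' ->
      c1 * Rpower p0 (- (q' - q)) <= T / T' /\
      T / T' <= c2 * Rpower p0 (- (q' - q)).
Proof.
  intros Heps Hq Hqq' Hq' Heta Hpstar Hpstar'.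
  destruct (potential_hit_time eps q eta ltac:(lra) ltac:(lra) ltac:(lra)) as [k [d [Hk [Hd Hhit]]]].
  destruct (potential_hit_time eps q' eta ltac:(lra) ltac:(lra) ltac:(lra)) as [k' [d' [Hk' [Hd' Hhit']]]].
  exists (k' / (2 * eps) * ((1 - q') / (1 - q))), (2 * eps / k * ((1 - q') / (1 - q))), (Rmin d d').
  split; [apply Rmult_lt_0_compat; apply Rdiv_lt_0_compat; lra|].
  split; [apply Rmult_lt_0_compat; apply Rdiv_lt_0_compat; lra|].
  split; [now apply Rmin_pos|].
  intros p0 th th' T T' Hp0 Hp0eta Hflow H0 Hflow' H0' HT HT'.
  pose proof (Rmin_l d d'). pose proof (Rmin_r d d').
  destruct (Hhit p0 th ltac:(lra) Hp0eta Hflow H0) as [_ Hbounds].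
  destruct (Hhit' p0 th' ltac:(lra) Hp0eta Hflow' H0') as [_ Hbounds'].
  pose proof (potential_pos q p0 ltac:(lra)). pose proof (potential_pos q' p0 ltac:(lra)).
  destruct (quotient_bounds T T' (potential q p0 / (2 * eps)) _ (potential q' p0 / (2 * eps)) _
              ltac:(apply Rdiv_lt_0_compat; lra) (Hbounds T HT)
              ltac:(apply Rdiv_lt_0_compat; lra) (Hbounds' T' HT')) as [Hlow Hup].
  unfold potential in *.
  assert (Hsplit : Rpower p0 (- (1 - q)) = Rpower p0 (- (q' - q)) * Rpower p0 (- (1 - q'))).
  { rewrite <- Rpower_plus. f_equal. ring. }
  assert (0 < Rpower p0 (- (1 - q'))) by apply exp_pos.
  assert (0 < Rpower p0 (- (q' - q))) by apply exp_pos.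
  rewrite Hsplit in Hlow, Hup. split.
  - eapply Rle_trans; [|exact Hlow]. right. field. repeat split; lra.
  - eapply Rle_trans; [exact Hup|]. right. field. repeat split; lra.
Qed.

Lemma hit_time_ratio_log eps q eta :
  0 < eps < 1 / 2 -> 0 < q < 1 ->
  0 < eta -> eta < pstar eps q -> eta < pstar eps 1 ->
  exists c1 c2 d : R, 0 < c1 /\ 0 < c2 /\ 0 < d /\
    forall (p0 : R) (th th' : R -> R) (T T' : R),
      0 < p0 < d -> p0 < eta ->
      is_flow eps q th -> ptilde th 0 = p0 ->
      is_flow eps 1 th' -> ptilde th' 0 = p0 ->
      first_hit (ptilde th) eta T -> first_hit (ptilde th') eta T' ->
      c1 * (Rpower p0 (- (1 - q)) / ln (1 / p0)) <= T / T' /\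
      T / T' <= c2 * (Rpower p0 (- (1 - q)) / ln (1 / p0)).
Proof.
  intros Heps Hq Heta Hpstar Hpstar1. pose proof (pstar_bounds eps 1).
  destruct (potential_hit_time eps q eta ltac:(lra) Hq ltac:(lra)) as [k [d [Hk [Hd Hhit]]]].
  destruct (log_potential_hit_time eps eta ltac:(lra) ltac:(lra)) as [k' [d' [Hk' [Hd' Hhit']]]].
  exists (k' / (2 * eps) / (1 - q)), (2 * eps / k / (1 - q)), (Rmin d d').
  split; [apply Rdiv_lt_0_compat; [apply Rdiv_lt_0_compat|]; lra|].
  split; [apply Rdiv_lt_0_compat; [apply Rdiv_lt_0_compat|]; lra|].
  split; [now apply Rmin_pos|].
  intros p0 th th' T T' Hp0 Hp0eta Hflow H0 Hflow' H0' HT HT'.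
  pose proof (Rmin_l d d'). pose proof (Rmin_r d d').
  destruct (Hhit p0 th ltac:(lra) Hp0eta Hflow H0) as [_ Hbounds].
  destruct (Hhit' p0 th' ltac:(lra) Hp0eta Hflow' H0') as [_ Hbounds'].
  pose proof (potential_pos q p0 ltac:(lra)). pose proof (log_potential_pos p0 ltac:(lra)).
  destruct (quotient_bounds T T' (potential q p0 / (2 * eps)) _ (log_potential p0 / (2 * eps)) _
              ltac:(apply Rdiv_lt_0_compat; lra) (Hbounds T HT)
              ltac:(apply Rdiv_lt_0_compat; lra) (Hbounds' T' HT')) as [Hlow Hup].
  unfold potential, log_potential in *. split.
  - eapply Rle_trans; [|exact Hlow]. right. field. repeat split; lra.
  - eapply Rle_trans; [exact Hup|]. right. field. repeat split; lra.
Qed.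

Lemma hit_time_ratio_unbounded eps q q' eta :
  0 < eps < 1 / 2 -> 0 < q -> q < q' -> q' <= 1 ->
  0 < eta -> eta < pstar eps q -> eta < pstar eps q' ->
  forall M : R, exists d : R, 0 < d /\
    forall (p0 : R) (th th' : R -> R) (T T' : R),
      0 < p0 < d -> p0 < eta ->
      is_flow eps q th -> ptilde th 0 = p0 ->
      is_flow eps q' th' -> ptilde th' 0 = p0 ->
      first_hit (ptilde th) eta T -> first_hit (ptilde th') eta T' ->
      M < T / T'.
Proof.
  intros Heps Hq Hqq' Hq' Heta Hpstar Hpstar' M.
  destruct Hq' as [Hq'1 | ->].
  - destruct (hit_time_ratio eps q q' eta Heps Hq Hqq' Hq'1 Heta Hpstar Hpstar')
      as [c1 [c2 [d [Hc1 [_ [Hd Hratio]]]]]].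
    destruct (Rpower_neg_unbounded c1 (q' - q) M Hc1 ltac:(lra)) as [d2 [Hd2 Hlarge]].
    exists (Rmin d d2). split; [now apply Rmin_pos|].
    intros p0 th th' T T' Hp0 Hp0eta Hflow H0 Hflow' H0' HT HT'.
    pose proof (Rmin_l d d2). pose proof (Rmin_r d d2).
    destruct (Hratio p0 th th' T T' ltac:(lra) Hp0eta Hflow H0 Hflow' H0' HT HT') as [Hlow _].
    specialize (Hlarge p0 ltac:(lra)). lra.
  - destruct (hit_time_ratio_log eps q eta Heps ltac:(lra) Heta Hpstar Hpstar')
      as [c1 [c2 [d [Hc1 [_ [Hd Hratio]]]]]].
    pose proof (pstar_bounds eps 1).
    set (a := 1 - q). assert (Ha : 0 < a) by (unfold a; lra).
    destruct (Rpower_neg_unbounded (c1 * (a / 2)) (a / 2) M ltac:(nra) ltac:(lra)) as [d2 [Hd2 Hlarge]].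
    exists (Rmin d d2). split; [now apply Rmin_pos|].
    intros p0 th th' T T' Hp0 Hp0eta Hflow H0 Hflow' H0' HT HT'.
    pose proof (Rmin_l d d2). pose proof (Rmin_r d d2).
    destruct (Hratio p0 th th' T T' ltac:(lra) Hp0eta Hflow H0 Hflow' H0' HT HT') as [Hlow _].
    specialize (Hlarge p0 ltac:(lra)). fold a in Hlow.
    (* The logarithm is beaten by [p0 ^ (- a / 2)], so the ratio grows at least like [p0 ^ (- a / 2)]. *)
    assert (Hln := ln_inv_lt_Rpower p0 a ltac:(lra) Ha).
    assert (Hlog := log_potential_pos p0 ltac:(lra)). unfold log_potential in Hlog.
    assert (Hhalf : 0 < Rpower p0 (- (a / 2))) by apply exp_pos.
    assert (Hsq : Rpower p0 (- a) = Rpower p0 (- (a / 2)) * Rpower p0 (- (a / 2)))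
      by (rewrite <- Rpower_plus; f_equal; field).
    assert (Hkey : a / 2 * Rpower p0 (- (a / 2)) < Rpower p0 (- a) / ln (1 / p0)).
    { rewrite Hsq. apply (Rmult_lt_reg_r (ln (1 / p0))); [exact Hlog|].
      field_simplify; [|lra].
      apply (Rmult_lt_compat_l (a / 2 * Rpower p0 (- (a / 2)))) in Hln; [|nra].
      field_simplify in Hln; lra. }
    apply (Rmult_lt_compat_l c1) in Hkey; [|exact Hc1]. lra.
Qed.

Lemma flow_q0_decreasing eps th :
  0 < eps < 1 / 2 -> is_flow eps 0 th ->
  0 < ptilde th 0 < 1 /\
  (forall t : R,
     is_derive (ptilde th) t
       (- (1 - 2 * eps) * pclean th t ^ 2 * ptilde th t ^ 2) /\
     - (1 - 2 * eps) * pclean th t ^ 2 * ptilde th t ^ 2 < 0) /\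
  (forall s t : R, 0 <= s < t -> ptilde th t < ptilde th s) /\
  (forall eta : R, ptilde th 0 < eta -> forall t : R, 0 <= t -> ptilde th t <> eta).
Proof.
  intros Heps Hflow.
  assert (Hx : forall t, 0 < ptilde th t < 1)
    by (intros t; unfold ptilde; pose proof (sigmoid_bounds (th t)); lra).
  assert (Hp : forall t, 0 < pclean th t) by (intros t; apply sigmoid_bounds).
  assert (Hderiv : forall t,
    is_derive (ptilde th) t (- (1 - 2 * eps) * pclean th t ^ 2 * ptilde th t ^ 2) /\
    - (1 - 2 * eps) * pclean th t ^ 2 * ptilde th t ^ 2 < 0).
  { intros t. specialize (Hx t). specialize (Hp t). split.
    - apply (is_derive_eq _ _ _ _ (is_derive_ptilde eps 0 th t Hflow)).
      rewrite Ropp_0, !Rpower_O by lra. ring.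
    - assert (0 < pclean th t ^ 2 * ptilde th t ^ 2) by (apply Rmult_lt_0_compat; apply pow_lt; lra).
      nra. }
  assert (Hdecr : forall s t, 0 <= s < t -> ptilde th t < ptilde th s).
  { intros s t Hst.
    destruct (MVT_is_derive (ptilde th) (fun u => - (1 - 2 * eps) * pclean th u ^ 2 * ptilde th u ^ 2)
                s t ltac:(lra) (fun u => proj1 (Hderiv u))) as [c [_ Hmvt]].
    pose proof (proj2 (Hderiv c)). nra. }
  split; [apply Hx|]. split; [exact Hderiv|]. split; [exact Hdecr|].
  intros eta Heta t Ht. destruct (Req_dec t 0) as [->|Ht0]; [lra|].
  specialize (Hdecr 0 t ltac:(lra)). lra.
Qed.

Theorem mainTheorem10 :
  (forall eps q eta : R,
     0 < eps < 1 / 2 -> 0 < q < 1 -> 0 < eta < pstar eps q ->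
     exists c1 c2 d : R, 0 < c1 /\ 0 < c2 /\ 0 < d /\
       forall (p0 : R) (th : R -> R),
         0 < p0 < d -> p0 < eta -> is_flow eps q th -> ptilde th 0 = p0 ->
         exists T : R, first_hit (ptilde th) eta T /\
           c1 * (Rpower p0 (- (1 - q)) / ((1 - q) * eps)) <= T /\
           T <= c2 * (Rpower p0 (- (1 - q)) / ((1 - q) * eps))) /\
  (forall eps eta : R,
     0 < eps < 1 / 2 -> 0 < eta < pstar eps 1 ->
     exists c1 c2 d : R, 0 < c1 /\ 0 < c2 /\ 0 < d /\
       forall (p0 : R) (th : R -> R),
         0 < p0 < d -> p0 < eta -> is_flow eps 1 th -> ptilde th 0 = p0 ->
         exists T : R, first_hit (ptilde th) eta T /\
           c1 * (ln (1 / p0) / eps) <= T /\ T <= c2 * (ln (1 / p0) / eps)) /\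
  (forall eps q q' eta : R,
     0 < eps < 1 / 2 -> 0 < q -> q < q' -> q' < 1 ->
     0 < eta -> eta < pstar eps q -> eta < pstar eps q' ->
     exists c1 c2 d : R, 0 < c1 /\ 0 < c2 /\ 0 < d /\
       forall (p0 : R) (th th' : R -> R) (T T' : R),
         0 < p0 < d -> p0 < eta ->
         is_flow eps q th -> ptilde th 0 = p0 ->
         is_flow eps q' th' -> ptilde th' 0 = p0 ->
         first_hit (ptilde th) eta T -> first_hit (ptilde th') eta T' ->
         c1 * Rpower p0 (- (q' - q)) <= T / T' /\
         T / T' <= c2 * Rpower p0 (- (q' - q))) /\
  (forall eps q eta : R,
     0 < eps < 1 / 2 -> 0 < q < 1 ->
     0 < eta -> eta < pstar eps q -> eta < pstar eps 1 ->
     exists c1 c2 d : R, 0 < c1 /\ 0 < c2 /\ 0 < d /\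
       forall (p0 : R) (th th' : R -> R) (T T' : R),
         0 < p0 < d -> p0 < eta ->
         is_flow eps q th -> ptilde th 0 = p0 ->
         is_flow eps 1 th' -> ptilde th' 0 = p0 ->
         first_hit (ptilde th) eta T -> first_hit (ptilde th') eta T' ->
         c1 * (Rpower p0 (- (1 - q)) / ln (1 / p0)) <= T / T' /\
         T / T' <= c2 * (Rpower p0 (- (1 - q)) / ln (1 / p0))) /\
  (forall eps q q' eta : R,
     0 < eps < 1 / 2 -> 0 < q -> q < q' -> q' <= 1 ->
     0 < eta -> eta < pstar eps q -> eta < pstar eps q' ->
     forall M : R, exists d : R, 0 < d /\
       forall (p0 : R) (th th' : R -> R) (T T' : R),
         0 < p0 < d -> p0 < eta ->
         is_flow eps q th -> ptilde th 0 = p0 ->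
         is_flow eps q' th' -> ptilde th' 0 = p0 ->
         first_hit (ptilde th) eta T -> first_hit (ptilde th') eta T' ->
         M < T / T') /\
  (forall (eps : R) (th : R -> R),
     0 < eps < 1 / 2 -> is_flow eps 0 th ->
     0 < ptilde th 0 < 1 /\
     (forall t : R,
        is_derive (ptilde th) t
          (- (1 - 2 * eps) * pclean th t ^ 2 * ptilde th t ^ 2) /\
        - (1 - 2 * eps) * pclean th t ^ 2 * ptilde th t ^ 2 < 0) /\
     (forall s t : R, 0 <= s < t -> ptilde th t < ptilde th s) /\
     (forall eta : R, ptilde th 0 < eta -> forall t : R, 0 <= t -> ptilde th t <> eta)).
Proof.
  split; [exact hit_time_Theta_q|].
  split; [exact hit_time_Theta_log|].
  split; [exact hit_time_ratio|].
  split; [exact hit_time_ratio_log|].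
  split; [exact hit_time_ratio_unbounded|].
  exact flow_q0_decreasing.
Qed.
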